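(* Let $\tau\in\mathbb{H}$ (the upper half-plane) and let $\Lambda=\langle 1,\tau\rangle_\mathbb{Z}$. (1) The lattice $\Lambda$ is isogenous to $\overline{\Lambda}$ if and only if $\tau$ belongs to a hyperbolic geodesic in $\mathbb{H}$ with both endpoints in $\mathbb{P}^1(\mathbb{Q})$, or with endpoints that are conjugate real quadratic irrationals. (2) There exists a non-zero element of $\mathrm{Isog}(\Lambda,\overline{\Lambda})$ with rational absolute value if and only if $\tau$ belongs to a hyperbolic geodesic in $\mathbb{H}$ with both endpoints in $\mathbb{P}^1(\mathbb{Q})$.
   Context: Geodesics in $\mathbb{H}$ are vertical half-lines and semicircles centered on the real axis; their endpoints lie in $\mathbb{P}^1(\mathbb{R})=\mathbb{R}\cup\{\infty\}$. $\langle 1,\tau\rangle_\mathbb{Z}$ is the $\mathbb{Z}$-module generated by $1,\tau$, and $\overline{\Lambda}$ the complex conjugate lattice. For lattices $\Lambda_1,\Lambda_2$, $\mathrm{Isog}(\Lambda_1,\Lambda_2)=\{\alpha\in\mathbb{C}:\alpha\Lambda_1\subset\Lambda_2\}$, and $\Lambda_1$ is isogenous to $\Lambda_2$ if this group is non-zero. *)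

From HB Require Import structures.
From mathcomp Require Import all_boot all_order all_algebra.
From mathcomp Require Import reals complex.
Set Implicit Arguments. Unset Strict Implicit. Unset Printing Implicit Defensive.
Import Order.TTheory GRing.Theory Num.Theory.
Local Open Scope ring_scope.

Section Defs.
Variable R : realType.
Local Notation C := R[i].

Definition in_upper_half_plane (z : C) : Prop := 0 < complex.Im z.

Definition in_lattice (w1 w2 z : C) : Prop :=
  exists m n : int, z = m%:~R * w1 + n%:~R * w2.

Definition isog (w1 w2 w1' w2' alpha : C) : Prop :=
  forall z, in_lattice w1 w2 z -> in_lattice w1' w2' (alpha * z).

Definition isogenous (w1 w2 w1' w2' : C) : Prop :=
  exists alpha, alpha != 0 /\ isog w1 w2 w1' w2' alpha.

(* points of P^1(R) = R u {oo}; None stands for oo *)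
Definition P1R := option R.

Definition is_rat (x : R) : Prop := exists q : rat, x = ratr q.

Definition in_P1Q (e : P1R) : Prop :=
  match e with None => True | Some x => is_rat x end.

(* z lies on the hyperbolic geodesic of H with endpoints e1 <> e2 in P^1(R):
   a vertical half-line if one endpoint is oo, otherwise the semicircle
   centred on the real axis with diameter [e1, e2]. *)
Definition on_geodesic (e1 e2 : P1R) (z : C) : Prop :=
  in_upper_half_plane z /\
  match e1, e2 with
  | None, None => False
  | Some a, None | None, Some a => complex.Re z = a
  | Some a, Some b => a != b /\
      (complex.Re z - (a + b) / 2%:R) ^+ 2 + (complex.Im z) ^+ 2
        = ((a - b) / 2%:R) ^+ 2
  end.

Definition conj_real_quad_irr (a b : R) : Prop :=
  ~ is_rat a /\
  exists p q d : rat, 0 <= d /\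
    a = ratr p + ratr q * Num.sqrt (ratr d) /\
    b = ratr p - ratr q * Num.sqrt (ratr d).

Definition quad_conj_endpoints (e1 e2 : P1R) : Prop :=
  match e1, e2 with
  | Some a, Some b => conj_real_quad_irr a b
  | _, _ => False
  end.

End Defs.

From HB Require Import structures.
From mathcomp Require Import all_boot all_order all_algebra.
From mathcomp Require Import reals complex.
From mathcomp Require Import ring lra.
From Stdlib Require Import Classical.

(* Since 1 is in the lattice, an isogeny alpha to the conjugate lattice has
   the form a + b conj(tau), and alpha tau = c + d conj(tau) forces d = -a and
   b |tau|^2 + 2 a Re tau = c.  For (a, b) <> 0 this equation describes the
   geodesic whose endpoints are the roots (-a +- sqrt D) / b of
   b t^2 + 2 a t - c, where D = a^2 + b c (a vertical line when b = 0); such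
   endpoints are rational or conjugate real quadratic irrationals.  Moreover
   |alpha|^2 = D, so |alpha| is rational exactly when sqrt D is, i.e. when the
   endpoints are rational.  Conversely the endpoints of a geodesic of either
   kind have rational sum and product, which yields such an equation with
   rational coefficients, and clearing denominators gives alpha. *)

Set Implicit Arguments.
Unset Strict Implicit.
Unset Printing Implicit Defensive.
Import Order.TTheory GRing.Theory Num.Theory.
Local Open Scope ring_scope.

Lemma rat_common_denom (a b c : rat) : exists2 n : int, n != 0 &
  exists a' b' c' : int,
    [/\ a'%:~R = n%:~R * a, b'%:~R = n%:~R * b & c'%:~R = n%:~R * c].
Proof.
exists (denq a * denq b * denq c); first by rewrite !mulf_neq0 ?denq_neq0.
exists (numq a * denq b * denq c), (denq a * numq b * denq c),
  (denq a * denq b * numq c).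
by rewrite !intrM !numqE; split; ring.
Qed.

Lemma normr_eq_ratr (F : numFieldType) (u : F) (q : rat) :
  `|u| ^+ 2 = ratr (q ^+ 2) -> `|u| = ratr `|q|.
Proof.
move=> h; apply/eqP; rewrite -(@eqrXn2 _ 2) ?ler0q ?normr_ge0 //.
by rewrite h -rmorphXn /= real_normK ?num_real.
Qed.

Section GeneralizedCircles.
Variable R : realType.
Implicit Types (a b c : R) (z : R[i]).

Definition on_gcircle a b c z : Prop :=
  b * (complex.Re z ^+ 2 + complex.Im z ^+ 2) + 2 * a * complex.Re z = c.

Lemma gcircle_disc a b c z : on_gcircle a b c z ->
  a ^+ 2 + b * c = (a + b * complex.Re z) ^+ 2 + (b * complex.Im z) ^+ 2.
Proof. by rewrite /on_gcircle => <-; ring. Qed.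

Lemma on_gcircleZ k a b c z :
  on_gcircle a b c z -> on_gcircle (k * a) (k * b) (k * c) z.
Proof. by rewrite /on_gcircle => <-; ring. Qed.

Lemma on_finite_geodesicE (e1 e2 : R) z : e1 != e2 ->
  on_geodesic (Some e1) (Some e2) z <->
  in_upper_half_plane z /\ on_gcircle (- (e1 + e2) / 2) 1 (- (e1 * e2)) z.
Proof.
move=> e12; rewrite /on_geodesic /on_gcircle.
have circleE : forall X Y : R,
    (X - (e1 + e2) / 2%:R) ^+ 2 + Y ^+ 2 - ((e1 - e2) / 2%:R) ^+ 2 =
    1 * (X ^+ 2 + Y ^+ 2) + 2 * (- (e1 + e2) / 2) * X - - (e1 * e2).
  by move=> X Y; field.
split=> -[hz h]; split=> //.
  by case: h => _ h; apply/eqP; rewrite -subr_eq0 -circleE h subrr.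
by split=> //; apply/eqP; rewrite -subr_eq0 circleE h subrr.
Qed.

(* The roots of b t^2 + 2 a t - c, the missing one being oo when b = 0. *)
Definition gcircle_ends a b c : P1R R * P1R R :=
  if b == 0 then (Some (c / (2 * a)), None)
  else let s := Num.sqrt (a ^+ 2 + b * c) in
       (Some ((- a + s) / b), Some ((- a - s) / b)).

Lemma on_geodesic_gcircle_ends a b c z :
  in_upper_half_plane z -> (a != 0) || (b != 0) -> on_gcircle a b c z ->
  on_geodesic (gcircle_ends a b c).1 (gcircle_ends a b c).2 z.
Proof.
rewrite /gcircle_ends => hz; case: (eqVneq b 0) => [-> /= a0 | b0 _] hc.
  split=> //; move: hc; rewrite /on_gcircle mul0r add0r => <-.
  by rewrite orbF in a0; rewrite [2 * a * _]mulrC mulfK // mulf_neq0 ?pnatr_eq0.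
set s := Num.sqrt _; have hD := gcircle_disc hc.
have s_gt0 : 0 < s.
  rewrite sqrtr_gt0 hD; apply: ltr_wpDl; first exact: sqr_ge0.
  by rewrite lt_def sqr_ge0 andbT sqrf_eq0 mulf_neq0 // gt_eqF.
have s2 : s ^+ 2 = a ^+ 2 + b * c by rewrite sqr_sqrtr // ltW // -sqrtr_gt0.
apply/on_finite_geodesicE => /=.
  apply: contra_neq (negbT (gt_eqF s_gt0)) => /(congr1 ( *%R^~ b)).
  rewrite !divfK //; lra.
split=> //; rewrite /on_gcircle.
have -> : - ((- a + s) / b * ((- a - s) / b)) = (s ^+ 2 - a ^+ 2) / b ^+ 2.
  by field.
by rewrite s2 -hc; field.
Qed.

Lemma gcircle_ends_rat (a b c w : rat) : a ^+ 2 + b * c = w ^+ 2 ->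
  let e := gcircle_ends (ratr a : R) (ratr b) (ratr c) in
  in_P1Q e.1 /\ in_P1Q e.2.
Proof.
move=> hD e; rewrite /e /gcircle_ends fmorph_eq0.
case: (eqVneq b 0) => [_ | b0] /=.
  by split=> //; exists (c / (2 * a)); rewrite fmorph_div rmorphM rmorph_nat.
have -> : Num.sqrt (ratr a ^+ 2 + ratr b * ratr c) = ratr `|w| :> R.
  by rewrite -rmorphXn -rmorphM -rmorphD hD rmorphXn sqrtr_sqr ratr_norm.
split; [exists ((- a + `|w|) / b) | exists ((- a - `|w|) / b)];
  by rewrite fmorph_div !(rmorphD, rmorphN).
Qed.

Lemma gcircle_ends_rat_or_quad (a b c : rat) : 0 <= a ^+ 2 + b * c ->
  let e := gcircle_ends (ratr a : R) (ratr b) (ratr c) in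
  (in_P1Q e.1 /\ in_P1Q e.2) \/ quad_conj_endpoints e.1 e.2.
Proof.
move=> hD e; case: (eqVneq b 0) => [b0 | b0].
  by left; apply: (@gcircle_ends_rat a b c a); rewrite b0 mul0r addr0.
have bR : ratr b != 0 :> R by rewrite fmorph_eq0.
rewrite /e /gcircle_ends (negbTE bR) /=; set s := Num.sqrt _.
have [[q hq] | irr] := classic (is_rat ((- ratr a + s) / ratr b)).
  left; split; first by exists q.
  exists (- (2 * a) / b - q).
  have -> : (- ratr a - s) / ratr b = - (2 * ratr a) / ratr b - (- ratr a + s) / ratr b.
    by field.
  by rewrite hq !(rmorphB, fmorph_div, rmorphN, rmorphM, rmorph_nat).
right; split=> //; exists (- a / b), b^-1, (a ^+ 2 + b * c); split=> //.
by rewrite /s !(rmorphD, rmorphM, rmorphN, fmorphV, fmorph_div, rmorphXn); split; field.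
Qed.

Lemma geodesic_of_rat_gcircle z (a b c : rat) :
  in_upper_half_plane z -> (a != 0) || (b != 0) ->
  on_gcircle (ratr a) (ratr b) (ratr c) z ->
  exists e1 e2 : P1R R, [/\ on_geodesic e1 e2 z,
    (in_P1Q e1 /\ in_P1Q e2) \/ quad_conj_endpoints e1 e2 &
    (exists w : rat, a ^+ 2 + b * c = w ^+ 2) -> in_P1Q e1 /\ in_P1Q e2].
Proof.
move=> hz ab hc; set e := gcircle_ends (ratr a) (ratr b) (ratr c).
exists e.1, e.2; split.
- by apply: on_geodesic_gcircle_ends; rewrite ?fmorph_eq0.
- apply: gcircle_ends_rat_or_quad.
  rewrite -(ler0q R) rmorphD rmorphXn rmorphM (gcircle_disc hc).
  by rewrite addr_ge0 ?sqr_ge0.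
- by move=> [w]; apply: gcircle_ends_rat.
Qed.

Lemma rat_gcircle_of_finite_geodesic (e1 e2 : R) z (a c : rat) :
  on_geodesic (Some e1) (Some e2) z ->
  e1 + e2 = - (2 * ratr a) -> e1 * e2 = - ratr c ->
  on_gcircle (ratr a) (ratr 1) (ratr c) z.
Proof.
move=> g hS hP; have [_ [e12 _]] := g.
have [_] := (on_finite_geodesicE z e12).1 g.
by rewrite hS hP !opprK mulrC mulKf ?pnatr_eq0 // rmorph1.
Qed.

Lemma rat_gcircle_of_geodesic (e1 e2 : P1R R) z :
  on_geodesic e1 e2 z -> (in_P1Q e1 /\ in_P1Q e2) \/ quad_conj_endpoints e1 e2 ->
  exists a b c : rat, [/\ (a != 0) || (b != 0),
    on_gcircle (ratr a) (ratr b) (ratr c) z &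
    in_P1Q e1 /\ in_P1Q e2 -> exists w : rat, a ^+ 2 + b * c = w ^+ 2].
Proof.
have vertical (P : Prop) : is_rat (complex.Re z) ->
    exists a b c : rat, [/\ (a != 0) || (b != 0),
      on_gcircle (ratr a) (ratr b) (ratr c) z &
      P -> exists w : rat, a ^+ 2 + b * c = w ^+ 2].
  move=> [q hq]; exists 1, 0, (2 * q); split; rewrite ?oner_neq0 //.
    by rewrite /on_gcircle hq rmorph0 rmorph1 rmorphM rmorph_nat mul0r add0r mulr1.
  by move=> _; exists 1; rewrite mul0r addr0.
case: e1 e2 => [x1|] [x2|] [hz g] ends //=.
- case: ends => [[[q1 h1] [q2 h2]] | [irr [p [q [d [d0 [h1 h2]]]]]]].
    exists (- (q1 + q2) / 2), 1, (- (q1 * q2)); split; rewrite ?oner_neq0 ?orbT //.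
      apply: (@rat_gcircle_of_finite_geodesic x1 x2); first by split.
        by rewrite h1 h2 fmorph_div rmorphN rmorphD rmorph_nat; field.
      by rewrite h1 h2 rmorphN rmorphM opprK.
    by move=> _; exists ((q1 - q2) / 2); field.
  exists (- p), 1, (q ^+ 2 * d - p ^+ 2); split; rewrite ?oner_neq0 ?orbT //.
    apply: (@rat_gcircle_of_finite_geodesic x1 x2); first by split.
      by rewrite h1 h2 rmorphN; ring.
    set s := Num.sqrt (ratr d : R).
    have -> : ratr (q ^+ 2 * d - p ^+ 2) = ratr q ^+ 2 * s ^+ 2 - ratr p ^+ 2 :> R.
      by rewrite sqr_sqrtr ?ler0q // rmorphB rmorphM !rmorphXn.
    by rewrite h1 h2 -/s; ring.
  by move=> [/irr].
- by apply: vertical; rewrite g; case: ends => [[]|].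
- by apply: vertical; rewrite g; case: ends => [[]|].
Qed.

End GeneralizedCircles.

Section IsogeniesToConjugate.
Variable R : realType.
Implicit Types (z alpha : R[i]).

Lemma intr_complex (m : int) : (m%:~R : R[i]) = ((m%:~R : R)%:C)%C.
Proof. by rewrite rmorph_int. Qed.

Lemma ratr_complex (q : rat) : (ratr q : R[i]) = ((ratr q : R)%:C)%C.
Proof. by rewrite fmorph_rat. Qed.

Lemma isog_conjP z alpha : complex.Im z != 0 ->
  isog 1 z 1 (conjc z) alpha <->
  exists a b c : int, on_gcircle a%:~R b%:~R c%:~R z /\ alpha = a%:~R + b%:~R * conjc z.
Proof.
case: z => x y /= y0; split.
- move=> iso.
  have [a [b ha]] : in_lattice 1 (conjc (x +i* y)%C) (alpha * 1).
    by apply: iso; exists 1, 0; rewrite mulr1z mulr0z mul0r addr0 mulr1.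
  have [c [d hc]] : in_lattice 1 (conjc (x +i* y)%C) (alpha * (x +i* y)%C).
    by apply: iso; exists 0, 1; rewrite mulr1z mulr0z mul0r add0r mul1r.
  rewrite mulr1 in ha; exists a, b, c; split; last by rewrite ha mulr1.
  move: hc; rewrite ha !mulr1 !intr_complex; simpc => -[hre him].
  have hd : (d%:~R : R) = - a%:~R by apply: (mulIf y0); lra.
  rewrite hd in hre; apply: (addIr (- a%:~R * x)).
  by rewrite /on_gcircle /= -hre; ring.
- move=> [a [b [c [hc ->]]]] _ [m [n ->]].
  exists (m * a + n * c), (m * b - n * a).
  move: hc; rewrite /on_gcircle /= => hc.
  rewrite !mulr1 !(intrD, intrM, intrN) !intr_complex -hc; simpc.
  by congr (_ +i* _)%C; ring.
Qed.

Lemma isog_conj_elem_eq0 z (a b : int) : complex.Im z != 0 ->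
  (a%:~R + b%:~R * conjc z == 0) = (a == 0) && (b == 0).
Proof.
case: z => x y /= y0; apply/eqP/andP => [|[/eqP -> /eqP ->]]; last first.
  by rewrite mul0r addr0.
rewrite !intr_complex; simpc => -[hre him].
have hb : (b%:~R : R) = 0 by apply: (mulIf y0); lra.
have ha : (a%:~R : R) = 0 by move: hre; rewrite hb mul0r addr0.
by split; rewrite -(intr_eq0 R) ?ha ?hb.
Qed.

Lemma normc_gcircle_elem (a b c : R) z : on_gcircle a b c z ->
  `|(a%:C + b%:C * conjc z)%C| ^+ 2 = ((a ^+ 2 + b * c)%:C)%C.
Proof.
move=> /gcircle_disc ->; case: z => x y /=.
rewrite normc_def -rmorphXn sqr_sqrtr ?addr_ge0 ?sqr_ge0 //; simpc.
by rewrite /= sqrrN.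
Qed.

Lemma rat_gcircle_of_isog_conj z alpha : complex.Im z != 0 -> alpha != 0 ->
  isog 1 z 1 (conjc z) alpha ->
  exists a b c : rat, [/\ (a != 0) || (b != 0),
    on_gcircle (ratr a) (ratr b) (ratr c) z & `|alpha| ^+ 2 = ratr (a ^+ 2 + b * c)].
Proof.
move=> z0 nz /(isog_conjP _ z0) [a [b [c [hc ha]]]].
move: nz; rewrite {}ha isog_conj_elem_eq0 // negb_and => ab.
exists a%:~R, b%:~R, c%:~R; rewrite !ratr_int !intr_eq0; split=> //.
rewrite !intr_complex (normc_gcircle_elem hc) ratr_complex; congr (_%:C)%C.
by rewrite rmorphD rmorphXn rmorphM !(rmorph_int (ratr : {rmorphism rat -> R})).
Qed.

Lemma isog_conj_of_rat_gcircle z (a b c : rat) : complex.Im z != 0 ->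
  (a != 0) || (b != 0) -> on_gcircle (ratr a) (ratr b) (ratr c) z ->
  exists alpha, [/\ alpha != 0, isog 1 z 1 (conjc z) alpha &
    exists k : rat, `|alpha| ^+ 2 = ratr (k ^+ 2 * (a ^+ 2 + b * c))].
Proof.
move=> z0 ab hc; have [n n0 [a' [b' [c' [ha hb hc']]]]] := rat_common_denom a b c.
have scale (r : rat) (m : int) : m%:~R = n%:~R * r -> m%:~R = n%:~R * ratr r :> R.
  by move=> h; rewrite -[LHS]ratr_int h rmorphM (rmorph_int (ratr : {rmorphism rat -> R})).
have hcn : on_gcircle a'%:~R b'%:~R c'%:~R z.
  by rewrite (scale _ _ ha) (scale _ _ hb) (scale _ _ hc'); apply: on_gcircleZ.
exists (a'%:~R + b'%:~R * conjc z); split.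
- rewrite isog_conj_elem_eq0 // -!(intr_eq0 rat) ha hb !mulf_eq0 intr_eq0.
  by rewrite (negbTE n0) /= negb_and.
- by apply/isog_conjP => //; exists a', b', c'.
- exists n%:~R; rewrite !intr_complex (normc_gcircle_elem hcn) ratr_complex.
  have -> : n%:~R ^+ 2 * (a ^+ 2 + b * c) = a'%:~R ^+ 2 + b'%:~R * c'%:~R.
    by rewrite ha hb hc'; ring.
  congr (_%:C)%C.
  by rewrite rmorphD rmorphXn rmorphM !(rmorph_int (ratr : {rmorphism rat -> R})).
Qed.

End IsogeniesToConjugate.

Theorem proposition3p1p1 (R : realType) (tau : R[i]) :
  in_upper_half_plane tau ->
  (isogenous 1 tau 1 (conjc tau) <->
     exists e1 e2 : P1R R, on_geodesic e1 e2 tau /\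
       ((in_P1Q e1 /\ in_P1Q e2) \/ quad_conj_endpoints e1 e2)) /\
  ((exists alpha : R[i], alpha != 0 /\ isog 1 tau 1 (conjc tau) alpha /\
       exists q : rat, `|alpha| = ratr q) <->
     exists e1 e2 : P1R R, on_geodesic e1 e2 tau /\ in_P1Q e1 /\ in_P1Q e2).
Proof.
move=> hz; have z0 : complex.Im tau != 0 by rewrite gt_eqF.
split; split.
- move=> [alpha [nz iso]].
  have [a [b [c [ab hc _]]]] := rat_gcircle_of_isog_conj z0 nz iso.
  have [e1 [e2 [g ends _]]] := geodesic_of_rat_gcircle hz ab hc.
  by exists e1, e2.
- move=> [e1 [e2 [g ends]]].
  have [a [b [c [ab hc _]]]] := rat_gcircle_of_geodesic g ends.
  have [alpha [nz iso _]] := isog_conj_of_rat_gcircle z0 ab hc.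
  by exists alpha.
- move=> [alpha [nz [iso [q hq]]]].
  have [a [b [c [ab hc hn]]]] := rat_gcircle_of_isog_conj z0 nz iso.
  have [e1 [e2 [g _ ends]]] := geodesic_of_rat_gcircle hz ab hc.
  exists e1, e2; split=> //; apply: ends; exists q.
  have : ratr (a ^+ 2 + b * c) = ratr (q ^+ 2) :> R[i] by rewrite -hn hq rmorphXn.
  exact: (fmorph_inj (ratr : {rmorphism rat -> R[i]})).
- move=> [e1 [e2 [g ends]]].
  have [a [b [c [ab hc hw]]]] := rat_gcircle_of_geodesic g (or_introl ends).
  have [w hD] := hw ends.
  have [alpha [nz iso [k hk]]] := isog_conj_of_rat_gcircle z0 ab hc.
  exists alpha; do 2!split=> //; exists `|k * w|; apply: normr_eq_ratr.
  by rewrite hk hD exprMn.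
Qed.
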